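(* Let $\mathcal{N}_1,\ldots,\mathcal{N}_l$ be subsets of $\mathcal{N}=\{1,\ldots,n\}$ with $\bigcup_{i=1}^l\mathcal{N}_i=\mathcal{N}$, satisfying the tree condition $$\mathcal{N}_i\cap\mathcal{N}_j\neq\emptyset\implies(\mathcal{N}_i\subseteq\mathcal{N}_j\text{ or }\mathcal{N}_j\subseteq\mathcal{N}_i).$$ For each $i$ let $\|\cdot\|_i:\mathbb{R}^{|\mathcal{N}_i|}\to\mathbb{R}_+$ be an arbitrary norm, and define $$\|z\|_A=\sum_{i=1}^l\|z_{\mathcal{N}_i}\|_i ,$$ where $\|z_{\mathcal{N}_i}\|_i$ means $\|\cdot\|_i$ applied to $(z_j)_{j\in\mathcal{N}_i}$. Let $\mathcal{G}=\{G_1,\ldots,G_g\}$ be the collection of distinct inclusion-maximal sets among $\mathcal{N}_1,\ldots,\mathcal{N}_l$ (these form a partition of $\mathcal{N}$). Then $\|\cdot\|_A$ is decomposable with respect to $\mathcal{G}$.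
   Context: For $z\in\mathbb{R}^n$ and $\Lambda\subseteq\mathcal{N}$, $z_\Lambda\in\mathbb{R}^n$ denotes the vector with $(z_\Lambda)_i=z_i$ for $i\in\Lambda$ and $0$ otherwise; $\mathrm{supp}(u)=\{i:u_i\neq0\}$. For a partition $\mathcal{G}=\{G_1,\ldots,G_g\}$ of $\mathcal{N}$ and $S\subseteq\{1,\ldots,g\}$ let $G_S=\bigcup_{i\in S}G_i$. A norm $\|\cdot\|$ on $\mathbb{R}^n$ is decomposable with respect to $\mathcal{G}$ if, whenever $u,v\in\mathbb{R}^n$ satisfy $\mathrm{supp}(u)\subseteq G_{S_u}$, $\mathrm{supp}(v)\subseteq G_{S_v}$ with $S_u,S_v$ disjoint subsets of $\{1,\ldots,g\}$, one has $\|u+v\|=\|u\|+\|v\|$. *)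

From HB Require Import structures.
From mathcomp Require Import all_boot all_order all_algebra.
Set Implicit Arguments. Unset Strict Implicit. Unset Printing Implicit Defensive.
Import Order.TTheory GRing.Theory Num.Theory.
Local Open Scope ring_scope.

Definition is_norm (R : realDomainType) (I : finType) (nu : (I -> R) -> R) : Prop :=
  [/\ (forall x, 0 <= nu x),
      (forall x, nu x = 0 -> forall j, x j = 0),
      (forall (a : R) x, nu (fun j => a * x j) = `|a| * nu x) &
      (forall x y, nu (fun j => x j + y j) <= nu x + nu y)].

Definition restrict (R : Type) (n : nat) (A : {set 'I_n}) (z : 'I_n -> R)
  : {x : 'I_n | x \in A} -> R := fun x => z (val x).

Definition normA (R : realDomainType) (n l : nat) (N : 'I_l -> {set 'I_n})
  (nu : forall i : 'I_l, ({x : 'I_n | x \in N i} -> R) -> R) (z : 'I_n -> R) : R :=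
  \sum_(i < l) nu i (@restrict R n (N i) z).

Definition maximal_sets (n l : nat) (N : 'I_l -> {set 'I_n}) : {set {set 'I_n}} :=
  [set N i | i in [set i : 'I_l | [forall j : 'I_l, (N i \subset N j) ==> (N j == N i)]]].

Definition unionG (n : nat) (S : {set {set 'I_n}}) : {set 'I_n} := \bigcup_(B in S) B.

Definition decomposable (R : realDomainType) (n : nat) (nrm : ('I_n -> R) -> R)
  (G : {set {set 'I_n}}) : Prop :=
  forall (Su Sv : {set {set 'I_n}}), Su \subset G -> Sv \subset G -> [disjoint Su & Sv] ->
  forall u v : 'I_n -> R,
    (forall j, u j != 0 -> j \in unionG Su) ->
    (forall j, v j != 0 -> j \in unionG Sv) ->
    nrm (fun j => u j + v j) = nrm u + nrm v.

(* Each N_i lies inside the maximal set containing any of its points, and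
   two maximal sets sharing a point coincide.  Hence if u and v are supported
   on unions of disjoint families of maximal sets, on every N_i one of them
   vanishes identically, so each summand of ||u + v||_A splits additively. *)

From HB Require Import structures.
From mathcomp Require Import all_boot all_order all_algebra.
From Stdlib Require Import FunctionalExtensionality.
Set Implicit Arguments. Unset Strict Implicit. Unset Printing Implicit Defensive.

Import Order.TTheory GRing.Theory Num.Theory.
Local Open Scope ring_scope.

Lemma is_norm0 (R : realDomainType) (I : finType) (nu : (I -> R) -> R) :
  is_norm nu -> nu (fun=> 0) = 0.
Proof.
case=> _ _ homog _.
by have /= := homog 0 (fun=> 0); rewrite mul0r normr0 mul0r.
Qed.

Lemma normD_vanishing (R : realDomainType) (I : finType) (nu : (I -> R) -> R)
    (x y : I -> R) :
  is_norm nu -> (forall j, x j = 0) \/ (forall j, y j = 0) ->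
  nu (fun j => x j + y j) = nu x + nu y.
Proof.
move=> nu_norm [x0 | y0].
- have -> : x = fun=> 0 by apply: functional_extensionality.
  by rewrite is_norm0 // add0r; congr nu; apply: functional_extensionality => j; rewrite add0r.
- have -> : y = fun=> 0 by apply: functional_extensionality.
  by rewrite is_norm0 // addr0; congr nu; apply: functional_extensionality => j; rewrite addr0.
Qed.

Section TreeFamily.

Variables (n l : nat) (N : 'I_l -> {set 'I_n}).
Hypothesis tree :
  forall i j : 'I_l, N i :&: N j != set0 -> (N i \subset N j) || (N j \subset N i).

Lemma sub_maximal_set i B x :
  B \in maximal_sets N -> x \in B -> x \in N i -> N i \subset B.
Proof.
case/imsetP=> a; rewrite inE => /forallP a_max -> xa xi.
have /tree/orP[a_sub_i | //] : N a :&: N i != set0.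
  by apply/set0Pn; exists x; rewrite inE xa xi.
by have := a_max i; rewrite a_sub_i => /eqP ->.
Qed.

Lemma maximal_sets_eq B B' x :
  B \in maximal_sets N -> B' \in maximal_sets N -> x \in B -> x \in B' -> B = B'.
Proof.
move=> BG B'G xB xB'.
case/imsetP: (BG) => a _ Ba; case/imsetP: (B'G) => b _ B'b.
apply/eqP; rewrite eqEsubset.
have NaB' : N a \subset B' by apply: (sub_maximal_set B'G xB'); rewrite -Ba.
have NbB : N b \subset B by apply: (sub_maximal_set BG xB); rewrite -B'b.
by rewrite {1}Ba NaB' B'b NbB.
Qed.

Lemma support_sub_maximal_set (R : realDomainType) (S : {set {set 'I_n}})
    (u : 'I_n -> R) i j :
  S \subset maximal_sets N -> (forall k, u k != 0 -> k \in unionG S) ->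
  j \in N i -> u j != 0 -> exists2 B, B \in S & N i \subset B.
Proof.
move=> /subsetP SG u_supp jNi /u_supp /bigcupP[B BS jB].
by exists B; last exact: sub_maximal_set (SG B BS) jB jNi.
Qed.

Lemma vanishing_on_block (R : realDomainType) (Su Sv : {set {set 'I_n}})
    (u v : 'I_n -> R) i :
  Su \subset maximal_sets N -> Sv \subset maximal_sets N -> [disjoint Su & Sv] ->
  (forall k, u k != 0 -> k \in unionG Su) ->
  (forall k, v k != 0 -> k \in unionG Sv) ->
  (forall j, j \in N i -> u j = 0) \/ (forall j, j \in N i -> v j = 0).
Proof.
move=> SuG SvG dis u_supp v_supp.
have [u0 | /forall_inPn[j jNi uj]] := boolP [forall j in N i, u j == 0].
  by left=> j jNi; apply/eqP; move/forall_inP: u0; apply.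
have [B BSu NiB] := support_sub_maximal_set SuG u_supp jNi uj.
right=> k kNi; apply/eqP/negP => /negP vk.
have [B' BSv NiB'] := support_sub_maximal_set SvG v_supp kNi vk.
have BB' : B = B'.
  apply: (@maximal_sets_eq _ _ k); [exact: subsetP SuG B BSu |
    exact: subsetP SvG B' BSv | exact: subsetP NiB k kNi | exact: subsetP NiB' k kNi].
by move/disjointFr: dis => /(_ B BSu); rewrite BB' BSv.
Qed.

End TreeFamily.

Theorem corollary2p3 (R : realFieldType) (n l : nat) (N : 'I_l -> {set 'I_n})
  (nu : forall i : 'I_l, ({x : 'I_n | x \in N i} -> R) -> R) :
  \bigcup_(i < l) N i = [set: 'I_n] ->
  (forall i j : 'I_l, N i :&: N j != set0 -> (N i \subset N j) || (N j \subset N i)) ->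
  (forall i : 'I_l, is_norm (nu i)) ->
  decomposable (normA nu) (maximal_sets N).
Proof.
(* Covering only makes maximal_sets N a partition; decomposability does not need it. *)
move=> _ tree norms Su Sv SuG SvG dis u v u_supp v_supp.
rewrite /normA -big_split; apply: eq_bigr => i _.
apply: normD_vanishing (norms i) _.
by case: (vanishing_on_block tree i SuG SvG dis u_supp v_supp) => zero;
  [left | right] => -[j jNi]; exact: zero.
Qed.
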